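(* For all finite multisets $\Gamma,\Delta$ of $\mathcal{L}_{A_m}^{\Box}$-formulas: the sequent $\Gamma\Rightarrow\Delta$ is derivable in $\mathsf{GK(A_m)}$ if and only if $\mathcal{I}(\Gamma\Rightarrow\Delta)$ is derivable in $\mathsf{K(A_m)}$.
   Context: $\mathcal{L}_{A_m}^{\Box}$-formulas are built from a countably infinite set $\mathrm{Var}$ of variables using binary $\to$ and unary $\Box$. Fix $p_0\in\mathrm{Var}$; $\overline{0}:=p_0\to p_0$, $\neg\varphi:=\varphi\to\overline{0}$, $\varphi\&\psi:=\neg\varphi\to\psi$, $0\varphi:=\overline{0}$, $(n+1)\varphi:=\varphi\&(n\varphi)$. The axiom system $\mathsf{K(A_m)}$ has axiom schemas (B) $(\varphi\to\psi)\to((\psi\to\chi)\to(\varphi\to\chi))$; (C) $(\varphi\to(\psi\to\chi))\to(\psi\to(\varphi\to\chi))$; (I) $\varphi\to\varphi$; (A) $((\varphi\to\psi)\to\psi)\to\varphi$; (K) $\Box(\varphi\to\psi)\to(\Box\varphi\to\Box\psi)$; (D$_n$) $\Box(n\varphi)\to n\Box\varphi$ ($n\ge2$); rules (mp) $\varphi,\varphi\to\psi/\psi$; (nec) $\varphi/\Box\varphi$; (con$_n$) $n\varphi/\varphi$ ($n\ge2$). A sequent $\Gamma\Rightarrow\Delta$ is an ordered pair of finite multisets of formulas; $\Gamma,\Delta$ denotes multiset union, $n\Gamma$ is $\Gamma$ repeated $n$ times, $n[\varphi]$ the multiset with $n$ copies of $\varphi$, $\Box\Gamma=[\Box\varphi:\varphi\in\Gamma]$.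 $\mathcal{I}(\varphi_1,\dots,\varphi_n\Rightarrow\psi_1,\dots,\psi_m):=(\varphi_1\&\dots\&\varphi_n)\to(\psi_1\&\dots\&\psi_m)$, an empty $\&$-combination being $\overline{0}$. The sequent calculus $\mathsf{GK(A_m)}$ has rules: (id) $\Delta\Rightarrow\Delta$ (no premises); (cut) from $\Gamma,\varphi\Rightarrow\Delta$ and $\Pi\Rightarrow\varphi,\Sigma$ infer $\Gamma,\Pi\Rightarrow\Sigma,\Delta$; (mix) from $\Gamma\Rightarrow\Delta$ and $\Pi\Rightarrow\Sigma$ infer $\Gamma,\Pi\Rightarrow\Sigma,\Delta$; (sc$_n$) from $n\Gamma\Rightarrow n\Delta$ infer $\Gamma\Rightarrow\Delta$ ($n\ge2$); ($\to\Rightarrow$) from $\Gamma,\psi\Rightarrow\varphi,\Delta$ infer $\Gamma,\varphi\to\psi\Rightarrow\Delta$; ($\Rightarrow\to$) from $\Gamma,\varphi\Rightarrow\psi,\Delta$ infer $\Gamma\Rightarrow\varphi\to\psi,\Delta$; ($\Box_n$) from $\Gamma\Rightarrow n[\varphi]$ infer $\Box\Gamma\Rightarrow n[\Box\varphi]$ ($n\ge0$). A derivation is a finite tree of sequents in which each node together with its parents is an instance of a rule. *)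

From Stdlib Require Import List Permutation.
Import ListNotations.

Inductive form : Type :=
| Var : nat -> form
| Imp : form -> form -> form
| Box : form -> form.

Definition p0 : form := Var 0.
Definition zero : form := Imp p0 p0.
Definition neg (a : form) : form := Imp a zero.
Definition amp (a b : form) : form := Imp (neg a) b.

Fixpoint nmul (n : nat) (a : form) : form :=
  match n with
  | O => zero
  | S k => amp a (nmul k a)
  end.

Inductive Kd : form -> Prop :=
| K_B : forall a b c, Kd (Imp (Imp a b) (Imp (Imp b c) (Imp a c)))
| K_C : forall a b c, Kd (Imp (Imp a (Imp b c)) (Imp b (Imp a c)))
| K_I : forall a, Kd (Imp a a)
| K_A : forall a b, Kd (Imp (Imp (Imp a b) b) a)
| K_K : forall a b, Kd (Imp (Box (Imp a b)) (Imp (Box a) (Box b)))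
| K_D : forall n a, 2 <= n -> Kd (Imp (Box (nmul n a)) (nmul n (Box a)))
| K_mp : forall a b, Kd a -> Kd (Imp a b) -> Kd b
| K_nec : forall a, Kd a -> Kd (Box a)
| K_con : forall n a, 2 <= n -> Kd (nmul n a) -> Kd a.

(* Sequents: pairs of finite multisets, represented by lists taken up to
   permutation (rule GK_perm below makes derivability a property of
   the underlying multisets). *)

Fixpoint ntimes (n : nat) (l : list form) : list form :=
  match n with
  | O => []
  | S k => l ++ ntimes k l
  end.

Inductive GKd : list form -> list form -> Prop :=
| GK_perm : forall G D G' D', GKd G D -> Permutation G G' -> Permutation D D' ->
    GKd G' D'
| GK_id : forall D, GKd D D
| GK_cut : forall G D P S a, GKd (G ++ [a]) D -> GKd P (a :: S) ->
    GKd (G ++ P) (S ++ D)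
| GK_mix : forall G D P S, GKd G D -> GKd P S -> GKd (G ++ P) (S ++ D)
| GK_sc : forall n G D, 2 <= n -> GKd (ntimes n G) (ntimes n D) -> GKd G D
| GK_impL : forall G D a b, GKd (G ++ [b]) (a :: D) -> GKd (G ++ [Imp a b]) D
| GK_impR : forall G D a b, GKd (G ++ [a]) (b :: D) -> GKd G (Imp a b :: D)
| GK_box : forall n G a, GKd G (repeat a n) ->
    GKd (map Box G) (repeat (Box a) n).

Fixpoint bigamp (l : list form) : form :=
  match l with
  | [] => zero
  | [a] => a
  | a :: l' => amp a (bigamp l')
  end.

Definition Iseq (G D : list form) : form := Imp (bigamp G) (bigamp D).

(* Write a <= b when K(A_m) proves a -> b.  Up to the induced equivalence,
   formulas form a partially ordered abelian group with operation &, unit 0bar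
   and inverse ~, in which a -> b is ~a & b.  Box is monotone, satisfies
   Box a & Box b <= Box (a & b) and Box 0bar = 0bar, and (D_n) gives
   Box (n a) <= n Box a; (con_n) cancels n a <= n b to a <= b.  Reading
   Gamma => Delta as &Gamma <= &Delta, each rule of GK(A_m) is a valid
   inference in this group, which is soundness.  Conversely each axiom of
   K(A_m) is derivable as => phi and each rule is simulated by cut, (Box_n)
   and (sc_n); the sequent => &Gamma -> &Delta then unfolds to Gamma => Delta
   by cuts against the derivable sequents a -> b, a => b and a & b => a, b. *)

From Stdlib Require Import List Permutation.
From Stdlib Require Import Setoid Morphisms Lia.
Import ListNotations.

Definition kle (a b : form) : Prop := Kd (Imp a b).
Definition keqv (a b : form) : Prop := kle a b /\ kle b a.

Lemma kle_refl a : kle a a.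
Proof. apply K_I. Qed.

Lemma kle_trans a b c : kle a b -> kle b c -> kle a c.
Proof. intros Hab Hbc. exact (K_mp _ _ Hbc (K_mp _ _ Hab (K_B a b c))). Qed.

#[global] Instance kle_preorder : PreOrder kle.
Proof. split; [exact kle_refl | exact kle_trans]. Qed.

#[global] Instance keqv_equivalence : Equivalence keqv.
Proof.
  split.
  - intro a; split; reflexivity.
  - intros a b [Hab Hba]; split; assumption.
  - intros a b c [Hab Hba] [Hbc Hcb]; split; etransitivity; eassumption.
Qed.

Lemma Kd_exchange a b c : Kd (Imp a (Imp b c)) -> Kd (Imp b (Imp a c)).
Proof. intro H. exact (K_mp _ _ H (K_C a b c)). Qed.

Lemma kle_imp_l a b c : kle a b -> kle (Imp b c) (Imp a c).
Proof. intro H. exact (K_mp _ _ H (K_B a b c)). Qed.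

Lemma kle_imp_r a b c : kle b c -> kle (Imp a b) (Imp a c).
Proof. intro H. exact (K_mp _ _ H (Kd_exchange _ _ _ (K_B a b c))). Qed.

#[global] Instance kle_proper : Proper (keqv ==> keqv ==> iff) kle.
Proof.
  intros a a' [Ha Ha'] b b' [Hb Hb']; split; intro H.
  - rewrite Ha', H; exact Hb.
  - rewrite Ha, H; exact Hb'.
Qed.

#[global] Instance Kd_proper : Proper (keqv ==> iff) Kd.
Proof. intros a b [Hab Hba]; split; intro H; eapply K_mp; eassumption. Qed.

#[global] Instance Imp_proper : Proper (keqv ==> keqv ==> keqv) Imp.
Proof.
  intros a a' [Ha Ha'] b b' [Hb Hb']; split.
  - transitivity (Imp a b'); [apply kle_imp_r, Hb | apply kle_imp_l, Ha'].
  - transitivity (Imp a' b); [apply kle_imp_r, Hb' | apply kle_imp_l, Ha].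
Qed.

#[global] Instance Box_kle : Proper (kle ==> kle) Box.
Proof. intros a b H. exact (K_mp _ _ (K_nec _ H) (K_K a b)). Qed.

#[global] Instance Box_proper : Proper (keqv ==> keqv) Box.
Proof. intros a b [Hab Hba]; split; apply Box_kle; assumption. Qed.

#[global] Instance neg_proper : Proper (keqv ==> keqv) neg.
Proof. intros a b H; unfold neg; rewrite H; reflexivity. Qed.

#[global] Instance amp_proper : Proper (keqv ==> keqv ==> keqv) amp.
Proof. intros a a' Ha b b' Hb; unfold amp; rewrite Ha, Hb; reflexivity. Qed.

#[global] Instance nmul_proper n : Proper (keqv ==> keqv) (nmul n).
Proof.
  induction n as [|n IHn]; intros a b H; cbn [nmul].
  - reflexivity.
  - apply amp_proper; [exact H | exact (IHn a b H)].
Qed.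

Lemma kle_assertion a b : kle a (Imp (Imp a b) b).
Proof. exact (Kd_exchange _ _ _ (K_I (Imp a b))). Qed.

Lemma kle_imp_Kd t a : Kd t -> kle (Imp t a) a.
Proof. intro H. exact (K_mp _ _ H (kle_assertion t a)). Qed.

Lemma imp_exchange a b c : keqv (Imp a (Imp b c)) (Imp b (Imp a c)).
Proof. split; apply K_C. Qed.

Lemma neg_neg a : keqv (neg (neg a)) a.
Proof. split; [exact (K_A a zero) | exact (kle_assertion a zero)]. Qed.

Lemma kle_imp_self_imp a q : kle a (Imp (Imp q q) a).
Proof.
  transitivity (Imp (Imp a q) (Imp (Imp q q) q)).
  - etransitivity; [apply kle_assertion | apply kle_imp_r, kle_assertion].
  - etransitivity; [apply K_C | apply kle_imp_r, K_A].
Qed.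

Lemma zero_imp a : keqv (Imp zero a) a.
Proof. split; [apply kle_imp_Kd, K_I | apply kle_imp_self_imp]. Qed.

Lemma Kd_zero_kle a : Kd a <-> kle zero a.
Proof.
  split; intro H.
  - exact (K_mp _ _ H (kle_imp_self_imp a p0)).
  - exact (K_mp _ _ (K_I p0) H).
Qed.

Lemma imp_self a : keqv (Imp a a) zero.
Proof.
  split.
  - exact (Kd_exchange _ _ _ (kle_imp_self_imp p0 a)).
  - apply (proj1 (Kd_zero_kle _)), K_I.
Qed.

Lemma contraposition a b : keqv (Imp a b) (Imp (neg b) (neg a)).
Proof.
  split; [exact (K_B a b zero) |].
  rewrite <- (neg_neg a) at 2; rewrite <- (neg_neg b) at 2.
  exact (K_B (neg b) (neg a) zero).
Qed.

Lemma imp_neg_converse a b : keqv (Imp a b) (neg (Imp b a)).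
Proof.
  split.
  - transitivity (Imp (Imp b a) (Imp a a)); [exact (K_B a b a) |].
    apply kle_imp_r, imp_self.
  - apply Kd_exchange; change (kle a (Imp (neg (Imp b a)) b)).
    rewrite contraposition, neg_neg, <- (zero_imp a) at 1.
    exact (Kd_exchange _ _ _ (K_B b zero a)).
Qed.

Lemma imp_imp_l a b c : keqv (Imp (Imp a b) c) (Imp (neg a) (Imp b c)).
Proof.
  rewrite (contraposition (Imp a b)), <- imp_neg_converse, (contraposition b c),
    (imp_exchange (neg a)), <- contraposition.
  reflexivity.
Qed.

(** * The abelian group of formulas *)

Lemma amp_imp a b c : keqv (Imp (amp a b) c) (Imp a (Imp b c)).
Proof. unfold amp; rewrite imp_imp_l, neg_neg; reflexivity. Qed.

Lemma kle_amp_l a b c : kle (amp a b) c <-> kle a (Imp b c).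
Proof. unfold kle; rewrite amp_imp; reflexivity. Qed.

Lemma imp_amp a b : keqv (Imp a b) (amp (neg a) b).
Proof. unfold amp; rewrite neg_neg; reflexivity. Qed.

Lemma amp_comm a b : keqv (amp a b) (amp b a).
Proof. unfold amp; rewrite contraposition, neg_neg; reflexivity. Qed.

Lemma amp_assoc a b c : keqv (amp (amp a b) c) (amp a (amp b c)).
Proof.
  unfold amp; rewrite <- (imp_neg_converse b), imp_imp_l, imp_exchange.
  reflexivity.
Qed.

Lemma amp_left_comm a b c : keqv (amp a (amp b c)) (amp b (amp a c)).
Proof. rewrite <- amp_assoc, (amp_comm a b), amp_assoc; reflexivity. Qed.

Lemma amp_medial a b c d :
  keqv (amp (amp a b) (amp c d)) (amp (amp a c) (amp b d)).
Proof. rewrite !amp_assoc, (amp_left_comm b c d); reflexivity. Qed.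

Lemma neg_zero : keqv (neg zero) zero.
Proof. exact (zero_imp zero). Qed.

Lemma amp_zero_r a : keqv (amp a zero) a.
Proof. exact (neg_neg a). Qed.

Lemma amp_zero_l a : keqv (amp zero a) a.
Proof. unfold amp; rewrite neg_zero; apply zero_imp. Qed.

Lemma amp_neg_r a : keqv (amp a (neg a)) zero.
Proof. exact (imp_self (neg a)). Qed.

Lemma amp_neg_cancel_l a b : keqv (amp a (amp (neg a) b)) b.
Proof. rewrite <- amp_assoc, amp_neg_r; apply amp_zero_l. Qed.

Lemma neg_amp a b : keqv (neg (amp a b)) (amp (neg a) (neg b)).
Proof. unfold neg at 1; rewrite amp_imp; apply imp_amp. Qed.

#[global] Instance amp_kle : Proper (kle ==> kle ==> kle) amp.
Proof.
  intros a a' Ha b b' Hb; unfold amp.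
  transitivity (Imp (neg a') b); [apply kle_imp_l, kle_imp_l, Ha | apply kle_imp_r, Hb].
Qed.

Lemma amp_kle_cancel_r a b c : kle (amp a c) (amp b c) -> kle a b.
Proof.
  intro H.
  rewrite <- (amp_zero_r a), <- (amp_zero_r b), <- (amp_neg_r c), <- !amp_assoc, H.
  reflexivity.
Qed.

Lemma nmul_amp n a b : keqv (nmul n (amp a b)) (amp (nmul n a) (nmul n b)).
Proof.
  induction n as [|n IHn]; cbn [nmul].
  - symmetry; apply amp_zero_l.
  - rewrite IHn; apply amp_medial.
Qed.

Lemma nmul_neg n a : keqv (nmul n (neg a)) (neg (nmul n a)).
Proof.
  induction n as [|n IHn]; cbn [nmul].
  - symmetry; apply neg_zero.
  - rewrite IHn, neg_amp; reflexivity.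
Qed.

Lemma nmul_imp n a b : keqv (nmul n (Imp a b)) (Imp (nmul n a) (nmul n b)).
Proof. rewrite !imp_amp, nmul_amp, nmul_neg; reflexivity. Qed.

Lemma nmul_kle_cancel n a b : 2 <= n -> kle (nmul n a) (nmul n b) -> kle a b.
Proof. intros Hn H. apply (K_con n); [exact Hn |]. rewrite nmul_imp; exact H. Qed.

Lemma box_amp a b : kle (amp (Box a) (Box b)) (Box (amp a b)).
Proof.
  apply kle_amp_l; transitivity (Box (Imp b (amp a b))).
  - apply Box_kle, kle_amp_l; reflexivity.
  - apply K_K.
Qed.

Lemma zero_kle_box_zero : kle zero (Box zero).
Proof. apply (proj1 (Kd_zero_kle _)), K_nec, K_I. Qed.

Lemma box_zero_kle_zero : kle (Box zero) zero.
Proof.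
  apply (amp_kle_cancel_r _ _ (Box zero)); rewrite amp_zero_l.
  apply kle_amp_l; transitivity (Box (Imp zero zero)).
  - apply Box_kle; rewrite zero_imp; reflexivity.
  - apply K_K.
Qed.

Lemma box_nmul n a : kle (Box (nmul n a)) (nmul n (Box a)).
Proof.
  destruct n as [|[|n]].
  - apply box_zero_kle_zero.
  - cbn [nmul]; rewrite !amp_zero_r; reflexivity.
  - apply K_D; lia.
Qed.

Lemma bigamp_cons a L : keqv (bigamp (a :: L)) (amp a (bigamp L)).
Proof. destruct L; [symmetry; apply amp_zero_r | reflexivity]. Qed.

Lemma bigamp_app G P : keqv (bigamp (G ++ P)) (amp (bigamp G) (bigamp P)).
Proof.
  induction G as [|a G IHG]; cbn [app].
  - symmetry; apply amp_zero_l.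
  - rewrite !bigamp_cons, IHG, amp_assoc; reflexivity.
Qed.

#[global] Instance bigamp_Permutation : Proper (@Permutation form ==> keqv) bigamp.
Proof.
  intros G G' HG; induction HG as [| a G G' _ IH | a b G | G G' G'' _ IH _ IH'].
  - reflexivity.
  - rewrite !bigamp_cons, IH; reflexivity.
  - rewrite !bigamp_cons; apply amp_left_comm.
  - etransitivity; eassumption.
Qed.

Lemma bigamp_ntimes n L : keqv (bigamp (ntimes n L)) (nmul n (bigamp L)).
Proof.
  induction n as [|n IHn]; cbn [ntimes nmul]; [reflexivity |].
  rewrite bigamp_app, IHn; reflexivity.
Qed.

Lemma bigamp_repeat n a : keqv (bigamp (repeat a n)) (nmul n a).
Proof.
  induction n as [|n IHn]; cbn [repeat nmul]; [reflexivity |].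
  rewrite bigamp_cons, IHn; reflexivity.
Qed.

Lemma bigamp_map_Box G : kle (bigamp (map Box G)) (Box (bigamp G)).
Proof.
  induction G as [|a G IHG]; cbn [map].
  - apply zero_kle_box_zero.
  - rewrite !bigamp_cons, IHG; apply box_amp.
Qed.

(** * Soundness *)

Lemma kle_cut g d p s a :
  kle (amp g a) d -> kle p (amp a s) -> kle (amp g p) (amp s d).
Proof.
  intros Hg Hp.
  rewrite Hp, <- amp_assoc, Hg, amp_comm; reflexivity.
Qed.

Lemma kle_imp_intro_l g d a b :
  kle (amp g b) (amp a d) -> kle (amp g (Imp a b)) d.
Proof.
  intro H; apply (amp_kle_cancel_r _ _ a).
  rewrite imp_amp, amp_assoc, (amp_comm (amp (neg a) b) a), amp_neg_cancel_l,
    (amp_comm d a).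
  exact H.
Qed.

Lemma kle_imp_intro_r g d a b :
  kle (amp g a) (amp b d) -> kle g (amp (Imp a b) d).
Proof.
  intro H; apply (amp_kle_cancel_r _ _ a).
  rewrite imp_amp, (amp_comm (amp (amp (neg a) b) d) a), amp_assoc,
    amp_neg_cancel_l.
  exact H.
Qed.

Theorem GKd_sound G D : GKd G D -> kle (bigamp G) (bigamp D).
Proof.
  induction 1 as [G D G' D' _ IH HG HD | D | G D P S a _ IH1 _ IH2
    | G D P S _ IH1 _ IH2 | n G D Hn _ IH | G D a b _ IH | G D a b _ IH
    | n G a _ IH];
    rewrite ?bigamp_app, ?bigamp_cons, ?amp_zero_r in *.
  - rewrite <- HG, <- HD; exact IH.
  - reflexivity.
  - exact (kle_cut _ _ _ _ _ IH1 IH2).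
  - rewrite IH1, IH2, amp_comm; reflexivity.
  - rewrite !bigamp_ntimes in IH; exact (nmul_kle_cancel n _ _ Hn IH).
  - apply kle_imp_intro_l; exact IH.
  - apply kle_imp_intro_r; exact IH.
  - rewrite !bigamp_repeat in *.
    rewrite bigamp_map_Box, IH; apply box_nmul.
Qed.

(** * Derived rules of GK(A_m) *)

Lemma ntimes_nil n : ntimes n [] = [].
Proof. induction n as [|n IHn]; [reflexivity | exact IHn]. Qed.

Lemma ntimes_singleton n a : ntimes n [a] = repeat a n.
Proof. induction n as [|n IHn]; cbn; [reflexivity | rewrite IHn; reflexivity]. Qed.

Ltac split_list x r :=
  lazymatch r with
  | x :: ?t => constr:(@pair (list form) (list form) nil t)
  | ?y :: ?t =>
      let p := split_list x t in
      lazymatch p with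
      | pair ?l1 ?l2 => constr:(@pair (list form) (list form) (y :: l1) l2)
      end
  end.

Ltac perm_solve :=
  simpl;
  lazymatch goal with
  | |- Permutation nil nil => apply perm_nil
  | |- Permutation (?x :: ?l) ?r =>
      let p := split_list x r in
      lazymatch p with
      | pair ?l1 ?l2 =>
          change r with (l1 ++ x :: l2); apply Permutation_cons_app; perm_solve
      end
  end.

Ltac GKd_perm G D := apply (GK_perm G D); [| perm_solve | perm_solve].

Lemma GKd_cut a G D P S : GKd (a :: G) D -> GKd P (a :: S) -> GKd (G ++ P) (S ++ D).
Proof.
  intros H1 H2; apply GK_cut with (a := a); [| exact H2].
  apply (GK_perm (a :: G) D); [exact H1 | apply Permutation_cons_append | reflexivity].
Qed.

Lemma GKd_impL a b G D : GKd (b :: G) (a :: D) -> GKd (Imp a b :: G) D.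
Proof.
  intro H; apply (GK_perm (G ++ [Imp a b]) D);
    [| symmetry; apply Permutation_cons_append | reflexivity].
  apply GK_impL, (GK_perm (b :: G) (a :: D));
    [exact H | apply Permutation_cons_append | reflexivity].
Qed.

Lemma GKd_impR a b G D : GKd (a :: G) (b :: D) -> GKd G (Imp a b :: D).
Proof.
  intro H; apply GK_impR, (GK_perm (a :: G) (b :: D));
    [exact H | apply Permutation_cons_append | reflexivity].
Qed.

Lemma GKd_mp a b : GKd [Imp a b; a] [b].
Proof. apply GKd_impL; GKd_perm [a; b] [a; b]; apply GK_id. Qed.

Lemma GKd_impR_inv a b G D : GKd G (Imp a b :: D) -> GKd (a :: G) (b :: D).
Proof.
  intro H; apply (GK_perm ([a] ++ G) (D ++ [b]));
    [exact (GKd_cut _ _ _ _ _ (GKd_mp a b) H) | reflexivity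
    | symmetry; apply Permutation_cons_append].
Qed.

Lemma GKd_zero_r : GKd [] [zero].
Proof. apply GKd_impR, GK_id. Qed.

Lemma GKd_zero_l : GKd [zero] [].
Proof. apply GKd_impL, GK_id. Qed.

Lemma GKd_zero_r_intro G D : GKd G D -> GKd G (zero :: D).
Proof. intro H; rewrite <- (app_nil_r G); exact (GK_mix _ _ _ _ H GKd_zero_r). Qed.

Lemma GKd_zero_l_intro G D : GKd G D -> GKd (zero :: G) D.
Proof. intro H; rewrite <- (app_nil_r D); exact (GK_mix _ _ _ _ GKd_zero_l H). Qed.

Lemma GKd_zero_r_elim G D : GKd G (zero :: D) -> GKd G D.
Proof. intro H; rewrite <- (app_nil_r D); exact (GKd_cut _ [] [] _ _ GKd_zero_l H). Qed.

Lemma GKd_zero_l_elim G D : GKd (zero :: G) D -> GKd G D.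
Proof. intro H; rewrite <- (app_nil_r G); exact (GKd_cut _ _ _ [] [] H GKd_zero_r). Qed.

Lemma GKd_amp_r_intro a b G D : GKd G (a :: b :: D) -> GKd G (amp a b :: D).
Proof. intro H; apply GKd_impR, GKd_impL, GKd_zero_l_intro, H. Qed.

Lemma GKd_amp_r_elim a b G D : GKd G (amp a b :: D) -> GKd G (a :: b :: D).
Proof.
  intro H.
  assert (Hab : GKd [amp a b] [a; b])
    by apply GKd_impL, GKd_impR, GKd_zero_r_intro, GK_id.
  apply (GK_perm ([] ++ G) (D ++ [a; b]));
    [exact (GKd_cut _ _ _ _ _ Hab H) | reflexivity | apply Permutation_app_comm].
Qed.

Lemma GKd_amp_l_elim a b G D : GKd (amp a b :: G) D -> GKd (a :: b :: G) D.
Proof.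
  intro H.
  assert (Hab : GKd [a; b] [amp a b]) by apply GKd_amp_r_intro, GK_id.
  apply (GK_perm (G ++ [a; b]) ([] ++ D));
    [exact (GKd_cut _ _ _ _ _ H Hab) | apply Permutation_app_comm | reflexivity].
Qed.

Lemma GKd_nmul_r_intro n a G D : GKd G (repeat a n ++ D) -> GKd G (nmul n a :: D).
Proof.
  revert D; induction n as [|n IHn]; intros D H; cbn [nmul].
  - apply GKd_zero_r_intro, H.
  - apply GKd_amp_r_intro.
    apply (GK_perm G (nmul n a :: a :: D)); [| reflexivity | apply perm_swap].
    apply IHn, (GK_perm G (a :: repeat a n ++ D));
      [exact H | reflexivity | apply Permutation_middle].
Qed.

Lemma GKd_nmul_r_elim n a G D : GKd G (nmul n a :: D) -> GKd G (repeat a n ++ D).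
Proof.
  revert D; induction n as [|n IHn]; intros D H; cbn [nmul repeat app] in *.
  - apply GKd_zero_r_elim, H.
  - apply GKd_amp_r_elim in H.
    apply (GK_perm G (repeat a n ++ a :: D));
      [| reflexivity | symmetry; apply Permutation_middle].
    apply IHn, (GK_perm G (a :: nmul n a :: D));
      [exact H | reflexivity | apply perm_swap].
Qed.

Lemma GKd_bigamp_r_elim L G D : GKd G (bigamp L :: D) -> GKd G (L ++ D).
Proof.
  revert D; induction L as [|a [|b L] IHL]; intros D H.
  - apply GKd_zero_r_elim, H.
  - exact H.
  - apply GKd_amp_r_elim in H.
    apply (GK_perm G ((b :: L) ++ a :: D));
      [| reflexivity | symmetry; apply Permutation_middle].
    apply IHL, (GK_perm G (a :: bigamp (b :: L) :: D));
      [exact H | reflexivity | apply perm_swap].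
Qed.

Lemma GKd_bigamp_l_elim L G D : GKd (bigamp L :: G) D -> GKd (L ++ G) D.
Proof.
  revert G; induction L as [|a [|b L] IHL]; intros G H.
  - apply GKd_zero_l_elim, H.
  - exact H.
  - apply GKd_amp_l_elim in H.
    apply (GK_perm ((b :: L) ++ a :: G) D);
      [| symmetry; apply Permutation_middle | reflexivity].
    apply IHL, (GK_perm (a :: bigamp (b :: L) :: G) D);
      [exact H | apply perm_swap | reflexivity].
Qed.

(** * Completeness *)

Lemma GKd_axiom_B a b c : GKd [] [Imp (Imp a b) (Imp (Imp b c) (Imp a c))].
Proof.
  do 3 apply GKd_impR.
  GKd_perm [Imp a b; a; Imp b c] [c]; apply GKd_impL.
  GKd_perm [Imp b c; b; a] [a; c]; apply GKd_impL.
  GKd_perm [a; b; c] [a; b; c]; apply GK_id.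
Qed.

Lemma GKd_axiom_C a b c : GKd [] [Imp (Imp a (Imp b c)) (Imp b (Imp a c))].
Proof.
  do 3 apply GKd_impR.
  GKd_perm [Imp a (Imp b c); a; b] [c]; do 2 apply GKd_impL.
  GKd_perm [a; b; c] [a; b; c]; apply GK_id.
Qed.

Lemma GKd_axiom_I a : GKd [] [Imp a a].
Proof. apply GKd_impR, GK_id. Qed.

Lemma GKd_axiom_A a b : GKd [] [Imp (Imp (Imp a b) b) a].
Proof.
  apply GKd_impR, GKd_impL, GKd_impR.
  GKd_perm [a; b] [a; b]; apply GK_id.
Qed.

Lemma GKd_axiom_K a b : GKd [] [Imp (Box (Imp a b)) (Imp (Box a) (Box b))].
Proof.
  do 2 apply GKd_impR.
  GKd_perm [Box (Imp a b); Box a] [Box b].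
  exact (GK_box 1 [Imp a b; a] b (GKd_mp a b)).
Qed.

Lemma GKd_axiom_D n a : GKd [] [Imp (Box (nmul n a)) (nmul n (Box a))].
Proof.
  apply GKd_impR, GKd_nmul_r_intro; rewrite app_nil_r.
  apply (GK_box n [nmul n a] a).
  rewrite <- (app_nil_r (repeat a n)); apply GKd_nmul_r_elim, GK_id.
Qed.

Lemma GKd_rule_mp a b : GKd [] [a] -> GKd [] [Imp a b] -> GKd [] [b].
Proof.
  intros Ha Hab.
  exact (GKd_cut a [] [b] [] [] (GKd_cut _ [a] [b] [] [] (GKd_mp a b) Hab) Ha).
Qed.

Lemma GKd_rule_con n a : 2 <= n -> GKd [] [nmul n a] -> GKd [] [a].
Proof.
  intros Hn H; apply (GK_sc n); [exact Hn |].
  rewrite ntimes_nil, ntimes_singleton.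
  rewrite <- (app_nil_r (repeat a n)); apply GKd_nmul_r_elim, H.
Qed.

Theorem GKd_complete a : Kd a -> GKd [] [a].
Proof.
  induction 1 as [| | | | | | a b _ Ha _ Hab | a _ Ha | n a Hn _ Ha].
  - apply GKd_axiom_B.
  - apply GKd_axiom_C.
  - apply GKd_axiom_I.
  - apply GKd_axiom_A.
  - apply GKd_axiom_K.
  - apply GKd_axiom_D.
  - exact (GKd_rule_mp a b Ha Hab).
  - exact (GK_box 1 [] a Ha).
  - exact (GKd_rule_con n a Hn Ha).
Qed.

Theorem proposition4p3 : forall G D : list form, GKd G D <-> Kd (Iseq G D).
Proof.
  intros G D; split.
  - exact (GKd_sound G D).
  - intro H; apply GKd_complete, GKd_impR_inv in H.
    rewrite <- (app_nil_r G), <- (app_nil_r D).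
    apply GKd_bigamp_l_elim, GKd_bigamp_r_elim, H.
Qed.
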